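(* Let $n,k$ be positive integers and $i\in\{1,\ldots,n\}$ such that $k\cdot\frac{i}{n}\cdot \frac{n-i}{n}< 1$, $n\ge 8k$, and $i<n/2$. If $H\sim\text{Hyp}(n,i,k)$, then $\mathbb{P}(H \ge ik/n) \ge \frac{k}{n}$.
   Context: $\text{Hyp}(n,i,k)$ denotes the hypergeometric distribution: the number of black marbles in a sample without replacement of size $k$ from an urn with $i$ black and $n-i$ white marbles, i.e. $\mathbb{P}(H=j)=\binom{i}{j}\binom{n-i}{k-j}/\binom{n}{k}$. *)

From mathcomp Require Import all_boot all_order all_algebra.
Set Implicit Arguments. Unset Strict Implicit. Unset Printing Implicit Defensive.
Import Order.TTheory GRing.Theory Num.Theory.
Local Open Scope ring_scope.

(* P(H = j) for H ~ Hyp(n,i,k): binom(i,j) binom(n-i,k-j) / binom(n,k),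
   meaningful for 0 <= j <= k (the support of H lies in {0,..,k}). *)
Definition hyp_pmf {R : fieldType} (n i k j : nat) : R :=
  ('C(i, j) * 'C(n - i, k - j))%:R / ('C(n, k))%:R.

Definition hyp_tail_ge {R : realFieldType} (n i k : nat) (x : R) : R :=
  \sum_(j < k.+1 | x <= (j : nat)%:R) hyp_pmf n i k j.

(* Write a_j = C(i,j) C(n-i,k-j), so that sum_j a_j = C(n,k) (Vandermonde) and
   consecutive terms satisfy a_j (i-j)(k-j) = a_(j+1) (j+1)(n-i-k+j+1).  Since
   i < n/2, the hypothesis k (i/n) ((n-i)/n) < 1 forces the mean ik/n below 2,
   so the threshold m = ceil(ik/n) is 1 or 2.  The ratio identity bounds the head
   k (a_0 + ... + a_(m-1)) by (n-k) a_m (for m = 2 this uses ik > n, which gives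
   a_0 <= a_1 <= 2 a_2, and n >= 5k), whence k C(n,k) <= n sum_(j >= m) a_j. *)

From mathcomp Require Import all_boot all_order all_algebra.
From mathcomp Require Import zify ring.
Import Order.TTheory GRing.Theory Num.Theory.
Local Open Scope ring_scope.

Definition hyp_count (n i k j : nat) : nat := 'C(i, j) * 'C(n - i, k - j).

Lemma sum_hyp_count n i k : (i <= n)%N ->
  (\sum_(j < k.+1) hyp_count n i k j)%N = 'C(n, k).
Proof. by move=> le_in; rewrite binomial.Vandermonde subnKC. Qed.

Lemma hyp_countS n i k j : (j < k)%N ->
  (hyp_count n i k j * ((i - j) * (k - j)) =
   hyp_count n i k j.+1 * (j.+1 * (n - i - (k - j.+1))))%N.
Proof.
move=> lt_jk; rewrite /hyp_count -(subnSK lt_jk).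
set r := (k - j.+1)%N.
transitivity ((i - j) * 'C(i, j) * (r.+1 * 'C(n - i, r.+1)))%N; first ring.
by rewrite -mul_bin_left (mul_bin_left (n - i) r); ring.
Qed.

Lemma tail_sum_lower (a : nat -> nat) n k m : (m <= k <= n)%N ->
  (k * \sum_(j < m) a j <= (n - k) * a m)%N ->
  (k * \sum_(j < k.+1) a j <= n * \sum_(j < k.+1 | m <= j) a j)%N.
Proof.
move=> /andP[le_mk le_kn] head_le.
set tail := (\sum_(j < k.+1 | m <= j) a j)%N.
have am_le : (a m <= tail)%N.
  by rewrite /tail (bigD1 (@Ordinal k.+1 m le_mk)) //= leq_addr.
rewrite (bigID (fun j : 'I_k.+1 => (j < m)%N)) /=.
rewrite -(big_ord_widen _ _ (leq_trans le_mk (leqnSn k))).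
rewrite (eq_bigl (fun j : 'I_k.+1 => (m <= j)%N)) => [|j]; last by rewrite -leqNgt.
rewrite mulnDr -[X in (_ <= X * _)%N](subnKC le_kn) mulnDl addnC leq_add2l.
exact: leq_trans head_le (leq_mul (leqnn _) am_le).
Qed.

Section HeadBounds.
Variables n i k : nat.
Local Notation a := (hyp_count n i k).

Lemma hyp_count0_le : (0 < i)%N -> (0 < k)%N ->
  (k * a 0 <= (n - k) * a 1)%N.
Proof.
move=> i_gt0 k_gt0.
have := hyp_countS n i k 0 k_gt0; rewrite !subn0 mul1n => E0.
apply: (@leq_trans (a 0 * (i * k))).
  by rewrite mulnC leq_mul2l leq_pmull ?orbT.
by rewrite E0 mulnC leq_mul2r; apply/orP; right; lia.
Qed.

Lemma hyp_count01_le : (0 < i)%N -> (1 < k)%N -> (n < i * k)%N ->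
  (i + k <= n)%N -> (5 * k <= n)%N ->
  (k * (a 0 + a 1) <= (n - k) * a 2)%N.
Proof.
move=> i_gt0 k_gt1 lt_n_ik le_ikn le_5kn.
have := hyp_countS n i k 0 (ltnW k_gt1); rewrite !subn0 mul1n => E0.
have := hyp_countS n i k 1 k_gt1 => E1.
have le01 : (a 0 <= a 1)%N.
  rewrite -(@leq_pmul2r (i * k)) ?muln_gt0 ?i_gt0 ?(ltnW k_gt1) // E0.
  by rewrite leq_mul2l; apply/orP; right; lia.
have le12 : (a 1 <= 2 * a 2)%N.
  rewrite -(@leq_pmul2r (n - i - (k - 2))); last by lia.
  apply: (@leq_trans (a 1 * ((i - 1) * (k - 1)))); last by rewrite E1 mulnA (mulnC (a 2)).
  rewrite leq_mul2l; apply/orP; right.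
  by rewrite mulnBl mulnBr mul1n muln1; lia.
apply: (@leq_trans (k * (4 * a 2))).
  by rewrite leq_mul2l; apply/orP; right; lia.
by rewrite mulnA leq_mul2r; apply/orP; right; lia.
Qed.

End HeadBounds.

Lemma mean_lt2_of_var_lt1 n i k : (2 * i < n)%N ->
  (k * i * (n - i) < n * n)%N -> (i * k < 2 * n)%N.
Proof.
move=> lt_2i_n var_lt.
have n_gt0 : (0 < n)%N by lia.
rewrite -(ltn_pmul2l n_gt0).
apply: (@leq_ltn_trans (2 * (n - i) * (i * k))).
  by rewrite leq_mul2r; apply/orP; right; lia.
have -> : (2 * (n - i) * (i * k) = 2 * (k * i * (n - i)))%N by ring.
by rewrite [X in (_ < X)%N]mulnCA ltn_pmul2l.
Qed.

Lemma hyp_tail_ge_ge_sum (R : realFieldType) n i k m (x : R) : x <= m%:R ->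
  (\sum_(j < k.+1 | m <= j) hyp_count n i k j)%N%:R / 'C(n, k)%:R
    <= hyp_tail_ge n i k x.
Proof.
move=> le_xm; rewrite natr_sum mulr_suml /hyp_tail_ge.
rewrite [X in X <= _]big_mkcond [X in _ <= X]big_mkcond /=.
apply: ler_sum => j _; case: ifP => le_mj.
  by rewrite ifT // (le_trans le_xm) // ler_nat.
by case: ifP => // _; rewrite /hyp_pmf divr_ge0 // ler0n.
Qed.

Lemma hyp_tail_mean_ge (R : realFieldType) n i k m : (i <= n)%N ->
  (m <= k <= n)%N -> (0 < n)%N -> (i * k <= m * n)%N ->
  (k * \sum_(j < m) hyp_count n i k j <= (n - k) * hyp_count n i k m)%N ->
  k%:R / n%:R <= hyp_tail_ge n i k (i%:R * k%:R / n%:R : R).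
Proof.
move=> le_in /andP[le_mk le_kn] n_gt0 le_ik_mn head_le.
have n_gt0R : 0 < n%:R :> R by rewrite ltr0n.
have C_gt0R : 0 < 'C(n, k)%:R :> R by rewrite ltr0n bin_gt0.
apply: (le_trans _ (@hyp_tail_ge_ge_sum R n i k m _ _)); last first.
  by rewrite ler_pdivrMr // -!natrM ler_nat.
rewrite ler_pdivlMr // mulrAC ler_pdivrMr // -!natrM ler_nat.
rewrite -(sum_hyp_count _ _ k le_in) [X in (_ <= X)%N]mulnC.
by apply: tail_sum_lower; rewrite ?le_mk.
Qed.

Theorem lemma9 (R : realFieldType) (n k i : nat) :
  (0 < n)%N -> (0 < k)%N -> (1 <= i <= n)%N ->
  k%:R * (i%:R / n%:R) * ((n - i)%:R / n%:R) < 1 :> R ->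
  (8 * k <= n)%N ->
  i%:R < n%:R / 2 :> R ->
  hyp_tail_ge n i k (i%:R * k%:R / n%:R : R) >= k%:R / n%:R.
Proof.
move=> n_gt0 k_gt0 /andP[i_gt0 le_in] var_lt1 le_8k_n lt_i_half.
have n_gt0R : 0 < n%:R :> R by rewrite ltr0n.
have lt_2i_n : (2 * i < n)%N.
  by move: lt_i_half; rewrite ltr_pdivlMr // -natrM ltr_nat mulnC.
have lt_ik_2n : (i * k < 2 * n)%N.
  apply: mean_lt2_of_var_lt1 => //.
  move: var_lt1; rewrite (_ : _ * _ = (k * i * (n - i))%:R / (n * n)%:R).
    by rewrite ltr_pdivrMr ?ltr0n ?muln_gt0 ?n_gt0 // mul1r ltr_nat.
  by rewrite !natrM; field; rewrite pnatr_eq0 -lt0n.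
have le_kn : (k <= n)%N by lia.
have [le_ik_n | lt_n_ik] := leqP (i * k) n.
  apply: (@hyp_tail_mean_ge _ _ _ _ 1) => //; first by rewrite k_gt0.
    by rewrite mul1n.
  by rewrite big_ord1 hyp_count0_le.
have k_gt1 : (1 < k)%N by nia.
apply: (@hyp_tail_mean_ge _ _ _ _ 2) => //; first by rewrite k_gt1.
  exact: ltnW.
rewrite big_ord_recr big_ord1 /=; apply: hyp_count01_le => //; lia.
Qed.
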